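(* Let $G$ be a connected finite simple graph of order $n$ with at least one edge and maximum degree $\Delta$. If $\Delta\geq \frac{n-2}{3}$, then $\mathrm{es}_{\Delta}(G)\leq\left\lceil\frac{n}{2}\right\rceil$.
   Context: $\mathrm{es}_{\Delta}(G)$ is the minimum number of edges of $G$ whose removal results in a subgraph with maximum degree $\Delta(G)-1$. *)

From mathcomp Require Import all_boot.
Set Implicit Arguments. Unset Strict Implicit. Unset Printing Implicit Defensive.

(* A finite simple graph on vertex type T is given by its edge set
   E : {set {set T}}, every edge being a 2-element subset of T. *)
Definition simple_edges (T : finType) (E : {set {set T}}) : bool :=
  [forall f in E, #|f| == 2].

Definition deg (T : finType) (E : {set {set T}}) (v : T) : nat :=
  #|[set f in E | v \in f]|.

Definition maxdeg (T : finType) (E : {set {set T}}) : nat :=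
  \max_(v : T) deg E v.

Definition adj (T : finType) (E : {set {set T}}) : rel T :=
  fun u v => [set u; v] \in E.

Definition connected_graph (T : finType) (E : {set {set T}}) : Prop :=
  forall u v : T, connect (adj E) u v.

(* es_Delta(G): minimum number of edges whose removal gives a subgraph with
   maximum degree Delta(G) - 1.  (Such a set always exists; the default
   #|E|.+1 is never attained when E is nonempty.) *)
Definition es_Delta (T : finType) (E : {set {set T}}) : nat :=
  \big[minn/#|E|.+1]_(F : {set {set T}} | (F \subset E) &&
                          (maxdeg (E :\: F) == (maxdeg E).-1)) #|F|.

From mathcomp Require Import all_boot zify.
Set Implicit Arguments. Unset Strict Implicit. Unset Printing Implicit Defensive.

(* Let D be the maximum degree and S the set of vertices of degree D. Deleting a
   minimum set of edges covering S lowers the maximum degree to exactly D - 1, as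
   some vertex of S meets only one deleted edge; so es_D(G) is at most the least
   size of an edge cover of S, which is at most |S| - nu with nu the matching
   number of G[S].
   Removing the vertices covered by every maximum matching and applying Gallai's
   lemma to the rest gives a subset X of S with |S| + |X| <= 2 nu + c(G[S - X]),
   where c counts components. Every vertex of S - X has degree D, so a component of
   G[S - X] with at most D vertices sends at least D edges out of S - X, and
   there are at most D |V - (S - X)| such edges; as n <= 3D + 2, at most two
   components are larger, each sending at least one edge out. Hence
   c(G[S - X]) <= n - |S - X| + 1, and 2 (|S| - nu) <= n + 1. *)

Lemma bigmin_leq (I : finType) (P : pred I) (F : I -> nat) m j :
  P j -> \big[minn/m]_(i | P i) F i <= F j.
Proof.
move=> Pj; have : j \in index_enum I by rewrite mem_index_enum.
elim: (index_enum I) => // i s IHs; rewrite inE big_cons => /orP [/eqP <- | js].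
  by rewrite Pj geq_minl.
by case: (P i); [apply: leq_trans (geq_minr _ _) (IHs js) | apply: IHs].
Qed.

Lemma card_set_in_sum (I : finType) (A : {set I}) (P : pred I) :
  #|[set x in A | P x]| = \sum_(x in A) P x.
Proof.
rewrite -sum1_card big_mkcond [RHS]big_mkcond /=.
by apply: eq_bigr => x _; rewrite !inE; case: (x \in A); case: (P x).
Qed.

Lemma sum_mem_card (I : finType) (A B : {set I}) : \sum_(x in A) (x \in B) = #|A :&: B|.
Proof. by rewrite -card_set_in_sum; apply: eq_card => x; rewrite !inE. Qed.

Lemma exists_setD1_notin (T : finType) (P Q : {set T}) t u v :
  #|Q| <= #|P| -> t \in P -> u \in Q :\: P -> v \in Q :\: P -> u != v ->
  exists2 x, x \in P :\ t & x \notin Q.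
Proof.
move=> leQP tP uQP vQP uv.
case: (pickP [pred x | (x \in P :\ t) && (x \notin Q)]) => [x /andP [] | noneQ].
  by exists x.
have uvQ : [set u; v] \subset Q.
  apply/subsetP => x; rewrite !inE => /orP [] /eqP ->.
    by case/setDP: uQP.
  by case/setDP: vQP.
have sub : P :\ t \subset Q :\: [set u; v].
  apply/subsetP => x xPt; move/negbT: (noneQ x); rewrite /= xPt negbK => xQ.
  have xP : x \in P by case/setD1P: xPt.
  rewrite !inE xQ andbT; apply/norP.
  by split; apply: contraTneq xP => ->; [case/setDP: uQP | case/setDP: vQP].
exfalso; have := subset_leq_card sub; have := subset_leq_card uvQ; have := cardsD1 t P.
by rewrite (cardsD Q) (setIidPr uvQ) cards2 uv tP /=; lia.
Qed.

Section SimpleGraph.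
Variables (T : finType) (E : {set {set T}}).
Hypothesis simpleE : simple_edges E.
Implicit Types (A C : {set T}) (M N F : {set {set T}}) (f g : {set T}).

Lemma card_edge f : f \in E -> #|f| = 2.
Proof. by move=> fE; apply/eqP; move/forall_inP: simpleE; apply. Qed.

Lemma edge_other f y : f \in E -> y \in f -> exists2 z, z != y & f = [set y; z].
Proof.
move=> /card_edge /eqP /cards2P [a [b [ab ->]]]; rewrite !inE => /orP [] /eqP ->.
  by exists b; rewrite // eq_sym.
by exists a; rewrite // setUC.
Qed.

Lemma adj_sym : symmetric (adj E).
Proof. by move=> u v; rewrite /adj setUC. Qed.

Lemma degE v : deg E v = \sum_(f in E) (v \in f).
Proof. exact: card_set_in_sum. Qed.

Lemma maxdeg_gt0 : E != set0 -> 0 < maxdeg E.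
Proof.
case/set0Pn => f fE; have /card_gt0P [x xf] : 0 < #|f| by rewrite card_edge.
apply: leq_trans (leq_bigmax x); rewrite card_gt0; apply/set0Pn; exists f.
by rewrite inE fE.
Qed.

Lemma exists_maxdeg_vertex : 0 < maxdeg E -> exists v, deg E v = maxdeg E.
Proof.
case: (pickP T) => [x _ | T0] D0.
  have T0 : 0 < #|T| by apply/card_gt0P; exists x.
  by rewrite /maxdeg; have [v ->] := eq_bigmax (deg E) T0; exists v.
by move: D0; rewrite /maxdeg big_pred0.
Qed.

Definition induced_adj C : rel T :=
  fun u v => [&& u \in C, v \in C & adj E u v].

Definition components C : {set T} := [set root (induced_adj C) x | x in C].

Definition component C (r : T) : {set T} :=
  [set z in C | root (induced_adj C) z == r].

Definition deg_out C (y : T) : nat :=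
  \sum_(f in E) ((y \in f) && (f :&: ~: C != set0)).

Lemma induced_adj_sym C : connect_sym (induced_adj C).
Proof.
apply: sym_connect_sym => u v; rewrite /induced_adj adj_sym.
by case: (u \in C); case: (v \in C).
Qed.

Lemma induced_path_last C x (p : seq T) :
  x \in C -> path (induced_adj C) x p -> last x p \in C.
Proof. by elim: p x => //= y p IHp x _ /andP [/and3P [_ yC _]]; apply: IHp. Qed.

Lemma card_components_setT : connected_graph E -> #|components setT| <= 1.
Proof.
move=> conn; apply/card_le1_eqP => _ _ /imsetP [x _ ->] /imsetP [y _ ->].
apply/(rootP (induced_adj_sym _)).
by rewrite (@eq_connect _ _ (adj E)) // => u v; rewrite /induced_adj !inE.
Qed.

Lemma sum_over_components C (F : T -> nat) :
  \sum_(y in C) F y = \sum_(r in components C) \sum_(y in component C r) F y.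
Proof.
rewrite (partition_big (root (induced_adj C)) (mem (components C))) /=.
  by apply: eq_bigr => r _; apply: eq_bigl => y; rewrite !inE.
by move=> y yC; apply: imset_f.
Qed.

Lemma sum_deg_out_le C : \sum_(y in C) deg_out C y <= \sum_(v in ~: C) deg E v.
Proof.
under [X in _ <= X]eq_bigr do rewrite degE.
rewrite /deg_out exchange_big [X in _ <= X]exchange_big /=.
apply: leq_sum => f fE.
have [meet0 | meetC'] := eqVneq (f :&: ~: C) set0.
  by rewrite big1 // => y _; rewrite andbF.
under eq_bigr do rewrite andbT.
have := cardsID C f; have := card_edge fE.
have : 0 < #|f :&: ~: C| by rewrite card_gt0.
by rewrite !sum_mem_card setDE (setIC C f) (setIC (~: C) f); lia.
Qed.

Lemma deg_le_deg_out_component C y : y \in C ->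
  deg E y <= deg_out C y + (#|component C (root (induced_adj C) y)| - 1).
Proof.
move=> yC; rewrite degE.
have split_meet f : (y \in f : nat) =
    ((y \in f) && (f :&: ~: C != set0)) + ((y \in f) && (f :&: ~: C == set0)).
  by case: (y \in f); case: (f :&: ~: C == set0).
rewrite (eq_bigr _ (fun f _ => split_meet f)) big_split leq_add2l -card_set_in_sum.
set K := component C _.
have yK : y \in K by rewrite !inE yC eqxx.
rewrite (cardsD1 y K) yK add1n subn1 /=.
apply: leq_trans (leq_imset_card (fun z => [set y; z]) (K :\ y)).
apply: subset_leq_card; apply/subsetP => f.
rewrite inE => /andP [fE /andP [yf /eqP meet0]].
have [z zy fz] := edge_other fE yf.
have zC : z \in C.
  apply: contraT => zC; move/setP: meet0 => /(_ z).
  by rewrite !inE fz !inE eqxx orbT zC.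
apply/imsetP; exists z => //; rewrite !inE zy zC /=.
apply/eqP/esym/(rootP (induced_adj_sym C)).
by apply: connect1; rewrite /induced_adj yC zC /adj -fz.
Qed.

Lemma deg_out_component_gt0 C y : connected_graph E -> y \in C -> ~: C != set0 ->
  0 < \sum_(z in component C (root (induced_adj C) y)) deg_out C z.
Proof.
move=> conn yC /set0Pn [v vC']; set K := component C _.
rewrite lt0n sum_nat_eq0; apply/negP => /forall_inP noout.
have closedK : closed (adj E) K.
  apply: intro_closed; first exact: sym_connect_sym adj_sym.
  move=> u w uw uK; have := noout u uK; rewrite /deg_out sum_nat_eq0.
  move=> /forall_inP /(_ _ uw) /eqP; rewrite set21 /=; case: eqP => // /setP meet0 _.
  have wC : w \in C by move: (meet0 w); rewrite !inE eqxx orbT /=; case: (w \in C).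
  move: uK; rewrite !inE => /andP [uC /eqP <-]; rewrite wC /=.
  by apply/eqP/esym/(rootP (induced_adj_sym C))/connect1; rewrite /induced_adj uC wC.
have := closed_connect closedK (conn y v).
rewrite !inE yC eqxx /= => /esym /andP [vC _].
by move: vC'; rewrite inE vC.
Qed.

Section ComponentsOfRegularPart.
Variables (D : nat) (C : {set T}).
Hypothesis regC : forall v, v \in C -> deg E v = D.

Lemma component_deg_out_ge r : r \in components C -> #|component C r| <= D ->
  D <= \sum_(y in component C r) deg_out C y.
Proof.
case/imsetP => y0 y0C -> smallK; set K := component C _ in smallK *.
have K0 : 0 < #|K| by apply/card_gt0P; exists y0; rewrite !inE y0C eqxx.
have : \sum_(y in K) (D - (#|K| - 1)) <= \sum_(y in K) deg_out C y.
  apply: leq_sum => y; rewrite inE => /andP [yC /eqP ry].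
  by have := deg_le_deg_out_component yC; rewrite regC // ry -/K; lia.
by rewrite sum_nat_const; nia.
Qed.

Hypotheses (conn : connected_graph E) (D0 : 0 < D) (nD : #|T| <= 3 * D + 2).
Hypothesis degD : forall v, deg E v <= D.

Lemma card_components_le : #|components C| <= #|~: C| + 1.
Proof.
have [C'0 | C'n0] := eqVneq (~: C) set0.
  have -> : C = setT by rewrite -[C]setCK C'0 setC0.
  exact: leq_trans (card_components_setT conn) (leq_addl _ _).
set R := components C; set B := ~: C in C'n0 *.
pose large r := D < #|component C r|.
have sum_s : \sum_(r in R | large r) 1 + \sum_(r in R | ~~ large r) D <= #|B| * D.
  apply: leq_trans (_ : \sum_(r in R) \sum_(y in component C r) deg_out C y <= _).
    rewrite [X in _ <= X](bigID large) /=.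
    apply: leq_add; apply: leq_sum => r /andP [rR].
      by case/imsetP: rR => y yC -> _; apply: deg_out_component_gt0.
    by rewrite -leqNgt; apply: component_deg_out_ge.
  rewrite -sum_over_components (leq_trans (sum_deg_out_le C)) // -sum_nat_const.
  by apply: leq_sum => v _; apply: degD.
have sum_large : \sum_(r in R | large r) D.+1 <= #|C|.
  rewrite -sum1_card sum_over_components [X in _ <= X](bigID large) /=.
  rewrite (leq_trans _ (leq_addr _ _)) //.
  by apply: leq_sum => r /andP [_ ?]; rewrite sum1_card.
have cardR : #|R| = \sum_(r in R | ~~ large r) 1 + \sum_(r in R | large r) 1.
  by rewrite -sum1_card (bigID large) addnC.
move: sum_s sum_large cardR; rewrite !sum_nat_cond_const.
set a := #|[set r | _ & ~~ large r]|; set b := #|[set r | _ & large r]|.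
have := cardsC C; rewrite -/B; have : 0 < #|B| by rewrite card_gt0.
case: b => [|b] B0 cardC le_ab le_b ->.
  suff : a <= #|B| by lia.
  by rewrite -(leq_pmul2r D0); lia.
suff : a < #|B| by nia.
by rewrite -(ltn_pmul2r D0); lia.
Qed.

End ComponentsOfRegularPart.

Definition induced_edges A : {set {set T}} := [set f in E | f \subset A].

Definition matching A M : bool :=
  (M \subset induced_edges A) && trivIset M.

Definition nu A : nat := \max_(M | matching A M) #|M|.

Definition max_matching A M : bool :=
  matching A M && (#|M| == nu A).

Lemma matching0 A : matching A set0.
Proof. by rewrite /matching sub0set; apply/trivIsetP => f g; rewrite inE. Qed.

Lemma leq_card_nu A M : matching A M -> #|M| <= nu A.
Proof. exact: leq_bigmax_cond. Qed.

Lemma exists_max_matching A : exists M, max_matching A M.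
Proof.
have : 0 < #|[pred M | matching A M]|.
  by apply/card_gt0P; exists set0; rewrite inE matching0.
case/(eq_bigmax_cond (fun M : {set {set T}} => #|M|)) => M mM cardM.
by exists M; rewrite /max_matching /nu cardM eqxx andbT; move: mM; rewrite inE.
Qed.

Lemma matching_edge A M f : matching A M -> f \in M -> f \in E /\ f \subset A.
Proof. by case/andP => /subsetP sub _ /sub; rewrite inE => /andP []. Qed.

Lemma matching_eq A M f g x : matching A M -> f \in M -> g \in M ->
  x \in f -> x \in g -> f = g.
Proof.
case/andP => _ /trivIsetP tM fM gM xf xg; apply: contraTeq isT => fg.
by have /disjoint_setI0/setP/(_ x) := tM f g fM gM fg; rewrite !inE xf xg.
Qed.

Lemma matchingS A M M' : M' \subset M -> matching A M -> matching A M'.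
Proof.
by move=> M'M /andP [MA tM]; rewrite /matching (subset_trans M'M MA) (trivIsetS M'M).
Qed.

Lemma matching_subset A A' M : A \subset A' -> matching A M -> matching A' M.
Proof.
move=> AA' /andP [MA tM]; rewrite /matching tM andbT; apply: subset_trans MA _.
by apply/subsetP => f; rewrite !inE => /andP [-> /subset_trans ->].
Qed.

Lemma matchingU1 A M f : matching A M -> f \in induced_edges A ->
  [disjoint f & cover M] -> matching A (f |: M).
Proof.
move=> /andP [MA tM] fA disf; rewrite /matching subUset sub1set fA MA /=.
have [] // := @trivIsetU1 _ f M _ tM.
- by move=> g gM; apply: disjointWr disf; apply: bigcup_sup.
- apply: contraL fA => /(subsetP MA); rewrite !inE => /andP [/card_edge].
  by rewrite cards0.
Qed.

Lemma cover_matching_sub A M : matching A M -> cover M \subset A.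
Proof. by move=> mM; apply/bigcupsP => f /(matching_edge mM) []. Qed.

Lemma card_cover_matching A M : matching A M -> #|cover M| = 2 * #|M|.
Proof.
move=> mM; case/andP: (mM) => _ /eqP <-; rewrite mulnC -sum_nat_const.
by apply: eq_bigr => f /(matching_edge mM) [/card_edge].
Qed.

Lemma double_nu_le A : 2 * nu A <= #|A|.
Proof.
have [M /andP [mM /eqP <-]] := exists_max_matching A.
by rewrite -(card_cover_matching mM) subset_leq_card // cover_matching_sub.
Qed.

Lemma card_unmatched A M : max_matching A M -> #|A :\: cover M| = #|A| - 2 * nu A.
Proof.
case/andP=> mM /eqP <-.
by rewrite cardsD (setIidPr (cover_matching_sub mM)) (card_cover_matching mM).
Qed.

Lemma no_augmenting_edge A M u w : max_matching A M -> induced_adj A u w ->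
  (u \in cover M) || (w \in cover M).
Proof.
case/andP => mM /eqP cardM /and3P [uA wA uw].
apply: contraT; rewrite negb_or => /andP [uM wM].
have uwA : [set u; w] \in induced_edges A.
  rewrite inE; apply/andP; split; first exact: uw.
  by apply/subsetP => x; rewrite !inE => /orP [] /eqP ->.
have /leq_card_nu : matching A ([set u; w] |: M).
  apply: matchingU1 mM uwA _; rewrite disjoint_subset.
  by apply/subsetP => x; rewrite !inE => /orP [] /eqP ->.
have uwM : [set u; w] \notin M.
  by apply: contra uM => uwM; apply/bigcupP; exists [set u; w]; rewrite ?set21.
by rewrite cardsU1 uwM -cardM add1n ltnn.
Qed.

Lemma max_matching_exchange A M N t x :
  max_matching A M -> max_matching A N -> t \notin cover N ->
  x \in cover M -> x \notin cover N -> x != t ->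
  exists2 N', max_matching A N' & (t \notin cover N') && (#|N :&: M| < #|N' :&: M|).
Proof.
move=> /andP [mM _] maxN tN /bigcupP [f fM xf] xN xt.
have [mN /eqP cardN] := andP maxN.
have [fE fA] := matching_edge mM fM.
have [y yx fxy] := edge_other fE xf.
have yf : y \in f by rewrite fxy !inE eqxx orbT.
have [xA yA] : x \in A /\ y \in A by rewrite !(subsetP fA).
have /bigcupP [g gN yg] : y \in cover N.
  have := no_augmenting_edge maxN (_ : induced_adj A x y); rewrite (negbTE xN); apply.
  by rewrite /induced_adj xA yA /adj -fxy.
have notin_f h : h \in N -> x \notin h.
  by move=> hN; apply: contra xN => xh; apply/bigcupP; exists h.
have fN : f \notin N by apply: contraL xf; apply: notin_f.
have gM : g \notin M.
  apply: contraL xN => gM; have fg := matching_eq mM fM gM yf yg.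
  by rewrite negbK; apply/bigcupP; exists g; rewrite // -fg.
set N' := f |: (N :\ g).
have mN' : matching A N'.
  apply: matchingU1 (matchingS (subD1set N g) mN) _ _; first by rewrite inE fE.
  rewrite disjoint_subset; apply/subsetP => z; rewrite fxy !inE => /orP [] /eqP -> {z}.
    by apply/bigcupP => -[h /setD1P [_ hN]]; apply/negP/notin_f.
  apply/bigcupP => -[h /setD1P [hg hN] yh].
  by case/eqP: hg; apply: matching_eq mN hN gN yh yg.
have cardN' : #|N'| = #|N| by rewrite cardsU1 !inE (negbTE fN) andbF (cardsD1 g N) gN.
exists N'; first by rewrite /max_matching mN' cardN' cardN eqxx.
apply/andP; split.
  apply/bigcupP => -[h]; rewrite !inE => /orP [/eqP -> | /andP [_ hN] th].
    rewrite fxy !inE => /orP [] /eqP tE; first by move: xt; rewrite tE eqxx.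
    by case/negP: tN; rewrite tE; apply/bigcupP; exists g.
  by case/negP: tN; apply/bigcupP; exists h.
have sub : f |: (N :&: M) \subset N' :&: M.
  apply/subsetP => h; rewrite !inE => /orP [/eqP -> | /andP [hN hM]].
    by rewrite eqxx fM.
  by rewrite hN hM !andbT; apply/orP; right; apply: contraNneq gM => <-.
by apply: leq_trans (subset_leq_card sub); rewrite cardsU1 !inE (negbTE fN).
Qed.

Section Gallai.
Variable A : {set T}.
Hypothesis missed : forall v, v \in A -> exists2 M, max_matching A M & v \notin cover M.

Lemma unmatched_path_last M u (p : seq T) :
  max_matching A M -> u \in A :\: cover M -> path (induced_adj A) u p ->
  last u p \notin cover M -> last u p = u.
Proof.
elim: p M u => //= t p IHp M u maxM /setDP [uA uM] /andP [ut tp].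
set v := last t p => vM; apply: contraTeq isT => vu.
have tA : t \in A by case/and3P: ut.
have tM : t \in cover M by have := no_augmenting_edge maxM ut; rewrite (negbTE uM).
have [N0 maxN0 tN0] := missed tA.
pose P N := max_matching A N && (t \notin cover N).
have [|N /andP [maxN tN] Nmax] := @arg_maxnP _ N0 P (fun N => #|N :&: M|).
  by rewrite /P maxN0.
have uN : u \in cover N.
  have := no_augmenting_edge maxN (_ : induced_adj A t u); rewrite (negbTE tN); apply.
  by move: ut; rewrite /induced_adj adj_sym uA tA.
have vN : v \in cover N.
  apply: contraT => vN; have tAN : t \in A :\: cover N by rewrite inE tN tA.
  by move: vM; rewrite /v (IHp N t maxN tAN tp vN) tM.
have vA : v \in A := induced_path_last tA tp.
have [x /setD1P [xt /setDP [xA xN]] xM] :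
    exists2 x, x \in (A :\: cover N) :\ t & x \notin A :\: cover M.
  apply: (exists_setD1_notin (u := u) (v := v)); rewrite 1?eq_sym ?vu //.
  - by rewrite !card_unmatched.
  - by rewrite inE tN tA.
  - by rewrite !inE uN uM uA.
  - by rewrite !inE vN vM vA.
have [|N' maxN' /andP [tN' ltN']] := max_matching_exchange maxM maxN tN _ xN xt.
  by move: xM; rewrite inE xA andbT negbK.
by have := Nmax N'; rewrite /P maxN' tN' /= leqNgt ltN' => /(_ isT).
Qed.

Lemma card_unmatched_le_components M :
  max_matching A M -> #|A :\: cover M| <= #|components A|.
Proof.
move=> maxM; rewrite -(@card_in_imset _ _ (root (induced_adj A)) (A :\: cover M)).
  by apply/subset_leq_card/imsetS/subsetDl.
move=> u w uAM wAM /(rootP (induced_adj_sym A)) /connectP [p pu wE]; subst w.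
by apply/esym/(unmatched_path_last maxM uAM pu); case/setDP: wAM.
Qed.

End Gallai.

Lemma nu_setD1_lt A v : v \in A -> (forall M, max_matching A M -> v \in cover M) ->
  nu (A :\ v) < nu A.
Proof.
move=> vA vcov; have [M /andP [mM /eqP cardM]] := exists_max_matching (A :\ v).
have mAM := matching_subset (subD1set A v) mM.
rewrite -cardM ltn_neqAle leq_card_nu // andbT; apply: contraTneq isT => eqM.
have maxAM : max_matching A M by rewrite /max_matching mAM eqM eqxx.
by have := subsetP (cover_matching_sub mM) v (vcov M maxAM); rewrite !inE eqxx.
Qed.

Lemma deficiency_le_components A :
  exists2 X : {set T}, X \subset A & #|A| + #|X| <= 2 * nu A + #|components (A :\: X)|.
Proof.
move: {2}#|A| (leqnn #|A|) => n; elim: n A => [|n IHn] A.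
  by rewrite leqn0 cards_eq0 => /eqP ->; exists set0; rewrite ?sub0set ?cards0.
move=> cardA.
case: (boolP [exists v in A, [forall M, max_matching A M ==> (v \in cover M)]]).
  case/exists_inP => v vA /forallP vcov.
  have [|X XA defX] := IHn (A :\ v); first by rewrite (cardsD1 v A) vA in cardA.
  have vX : v \notin X by apply: contraL vA => /(subsetP XA); rewrite !inE eqxx.
  exists (v |: X).
    by rewrite subUset sub1set vA (subset_trans XA (subsetDl _ _)).
  have ltnu := nu_setD1_lt vA (fun M => implyP (vcov M)).
  by rewrite -setDDl cardsU1 vX (cardsD1 v A) vA; lia.
rewrite negb_exists_in => /forall_inP noncov.
have missed v : v \in A -> exists2 M, max_matching A M & v \notin cover M.
  move=> vA; have /forallPn [M] := noncov v vA; rewrite negb_imply => /andP [].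
  by exists M.
exists set0; rewrite ?sub0set // setD0 cards0 addn0.
have [M maxM] := exists_max_matching A.
have := card_unmatched_le_components missed maxM.
by rewrite card_unmatched //; have := double_nu_le A; lia.
Qed.

Definition edge_cover (S : {set T}) F : bool := (F \subset E) && (S \subset cover F).

Lemma exists_edge_cover (S : {set T}) : (forall v, v \in S -> 0 < deg E v) ->
  exists2 F, edge_cover S F & #|F| <= #|S| - nu S.
Proof.
move=> degS; have [M maxM] := exists_max_matching S; have [mM _] := andP maxM.
pose edge_at u := odflt set0 [pick f in [set f in E | u \in f]].
have edge_atP u : u \in S -> edge_at u \in E /\ u \in edge_at u.
  move/degS/card_gt0P => [f0 f0E]; rewrite /edge_at; case: pickP => [f | none].
    by rewrite !inE => /andP [].
  by have := none f0; rewrite f0E.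
exists (M :|: [set edge_at u | u in S :\: cover M]).
  rewrite /edge_cover subUset -andbA; apply/and3P; split.
  - by apply/subsetP => f /(matching_edge mM) [].
  - by apply/subsetP => _ /imsetP [u /setDP [uS _] ->]; case: (edge_atP u uS).
  apply/subsetP => v vS; have [vM | vM] := boolP (v \in cover M).
    by case/bigcupP: vM => f fM vf; apply/bigcupP; exists f; rewrite ?inE ?fM.
  apply/bigcupP; exists (edge_at v); last by case: (edge_atP v vS).
  by rewrite inE imset_f ?orbT // inE vM.
set I := [set edge_at u | u in S :\: cover M].
have cardI : #|I| <= #|S| - 2 * nu S by rewrite -(card_unmatched maxM) leq_imset_card.
apply: leq_trans (leq_card_setU M I) _; apply: leq_trans (leq_add (leqnn _) cardI) _.
by have /andP [_ /eqP ->] := maxM; have := double_nu_le S; lia.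
Qed.

End SimpleGraph.

Section RemovingEdges.
Variables (T : finType) (E : {set {set T}}).
Implicit Types (F : {set {set T}}) (v : T).

Lemma deg_setD F v : F \subset E -> deg (E :\: F) v = deg E v - deg F v.
Proof.
move=> FE; have sub : [set f in F | v \in f] \subset [set f in E | v \in f].
  by apply/subsetP => f; rewrite !inE => /andP [/(subsetP FE) -> ->].
rewrite /deg -(setIidPr sub) -cardsD; apply: eq_card => f; rewrite !inE.
by case: (f \in F); case: (f \in E); case: (v \in f).
Qed.

Let S := [set v | deg E v == maxdeg E].

Lemma maxdeg_setD_edge_cover F :
  edge_cover E S F -> maxdeg (E :\: F) <= (maxdeg E).-1.
Proof.
case/andP => FE SF; apply/bigmax_leqP => v _; rewrite deg_setD //.
have := leq_bigmax (F := deg E) v; rewrite -/(maxdeg E).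
have [vS | vS] := boolP (v \in S).
  have /bigcupP [f fF vf] := subsetP SF v vS.
  have : 0 < deg F v by rewrite card_gt0; apply/set0Pn; exists f; rewrite inE fF.
  by move: vS; rewrite inE => /eqP; lia.
by move: vS; rewrite inE; lia.
Qed.

Lemma minimal_edge_cover_private F f : edge_cover E S F -> f \in F ->
  ~~ edge_cover E S (F :\ f) -> exists2 v, v \in S & deg F v = 1.
Proof.
case/andP => FE SF fF; rewrite /edge_cover (subset_trans (subsetDl F _) FE) /=.
case/subsetPn => v vS vF'; exists v => //.
have /bigcupP [g gF vg] := subsetP SF v vS.
have onlyf h : h \in F -> v \in h -> h = f.
  move=> hF vh; apply: contraNeq vF' => hf; apply/bigcupP; exists h => //.
  by rewrite !inE hf.
rewrite /deg (_ : [set h in F | v \in h] = [set f]) ?cards1 //.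
apply/setP => h; rewrite !inE; apply/andP/eqP => [[hF vh] | ->]; first exact: onlyf.
by rewrite fF -(onlyf g).
Qed.

Lemma es_Delta_le_edge_cover F :
  0 < maxdeg E -> edge_cover E S F -> es_Delta E <= #|F|.
Proof.
move=> D0 coverF.
have [F1 coverF1 F1min] := arg_minnP (fun F => #|F|) coverF.
apply: leq_trans (F1min F coverF); rewrite /es_Delta; apply: bigmin_leq.
have [F1E SF1] := andP coverF1; rewrite F1E eqn_leq maxdeg_setD_edge_cover //=.
have [v0 v0D] := exists_maxdeg_vertex D0.
have /bigcupP [f1 f1F1 _] : v0 \in cover F1 by apply: (subsetP SF1); rewrite inE v0D.
have notcover : ~~ edge_cover E S (F1 :\ f1).
  apply: contraTN isT => cover'; have := F1min _ cover'.
  by rewrite (cardsD1 f1 F1) f1F1 add1n ltnn.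
have [v vS degv] := minimal_edge_cover_private coverF1 f1F1 notcover.
apply: leq_trans (leq_bigmax v); rewrite deg_setD // degv.
by move: vS; rewrite inE => /eqP ->; rewrite subn1.
Qed.

End RemovingEdges.

Unset Implicit Arguments.

Theorem theorem5p5 (T : finType) (E : {set {set T}}) :
  simple_edges E ->
  connected_graph E ->
  E != set0 ->
  3 * maxdeg E + 2 >= #|T| ->
  es_Delta E <= (#|T| + 1) %/ 2.
Proof.
move=> simpleE conn E0 nD.
have D0 := maxdeg_gt0 simpleE E0.
set D := maxdeg E in D0 nD; set S := [set v | deg E v == D].
have degS v : v \in S -> deg E v = D by rewrite inE => /eqP.
have [F coverF cardF] : exists2 F, edge_cover E S F & #|F| <= #|S| - nu E S.
  by apply: exists_edge_cover => // v /degS ->.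
have [X XS defX] := deficiency_le_components simpleE S.
have regSX v : v \in S :\: X -> deg E v = D by case/setDP => /degS.
have compX := card_components_le simpleE regSX conn D0 nD (fun v => leq_bigmax v).
rewrite leq_divRL //.
apply: leq_trans (leq_mul (es_Delta_le_edge_cover D0 coverF) (leqnn 2)) _.
have := double_nu_le simpleE S; have := cardsC (S :\: X); have := subset_leq_card XS.
by rewrite cardsD (setIidPr XS); lia.
Qed.
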